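(* Let $n\geq 2$ be an integer and let $A$ be a real square matrix of order $n$ of the form $$A=\begin{pmatrix}1& -a_{12}&\cdots&-a_{1,n-1}&-a_{1n}\\ 0&1& \cdots&-a_{2,n-1}&-a_{2n}\\ \vdots&\vdots&\ddots&\vdots&\vdots\\ 0&0&\cdots&1&-a_{n-1,n}\\ a_1&a_2&\cdots&a_{n-1}&a_n\end{pmatrix},$$ i.e. the first $n-1$ rows form an upper unitriangular block whose entries strictly above the diagonal are $-a_{ij}$ ($1\le i<j\le n$), and the last row is $(a_1,\dots,a_n)$, where $a_{ij}\geq 0$ for all $1\leq i<j\leq n$, $a_i\geq 0$ for all $i=1,\ldots,n-1$, and $a_n>0$. Then $\det(A)>0$. *)

From mathcomp Require Import all_boot all_order all_algebra.
From mathcomp Require Import reals.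
Set Implicit Arguments. Unset Strict Implicit. Unset Printing Implicit Defensive.
Import Order.TTheory GRing.Theory Num.Theory.
Local Open Scope ring_scope.

(* Indices are 0-based: paper index i corresponds to 'I_n element of value i-1.
   Row n-1 (0-based, i.e. paper row n) is the last row (a_1,...,a_n);
   rows 0..n-2 form the upper unitriangular block with entries -a_{ij}
   strictly above the diagonal and 0 below. *)
Definition lemma_mx (R : pzRingType) (n : nat) (aa : 'I_n -> 'I_n -> R)
  (a : 'I_n -> R) : 'M[R]_n :=
  \matrix_(i < n, j < n)
    if (i : nat) == n.-1 then a j
    else if i == j then 1
    else if (i < j)%N then - aa i j
    else 0.

From mathcomp Require Import all_boot all_order all_algebra.
From mathcomp Require Import reals.
Import Order.TTheory GRing.Theory Num.Theory.
Set Implicit Arguments. Unset Strict Implicit. Unset Printing Implicit Defensive.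
Local Open Scope ring_scope.

(* Adding [a_{1j}] times the first column to column [j], for every [j > 1],
   clears the first row of the matrix except for its leading [1], and turns
   the last row into [a_j + a_1 a_{1j}].  Expanding along the first row leaves
   a matrix of the same shape, one size smaller, whose entries still satisfy
   the sign conditions; by induction the determinant is that of a [1 x 1]
   matrix [(a_n')] with [a_n' >= a_n > 0]. *)

Definition col_shear_mx (R : pzRingType) n (c : 'I_n.+1 -> R) : 'M[R]_n.+1 :=
  \matrix_(k, l) (if k == l then 1 else if k == ord0 then c l else 0).

Lemma det_col_shear_mx (R : comPzRingType) n (c : 'I_n.+1 -> R) :
  \det (col_shear_mx c) = 1.
Proof.
rewrite -det_tr det_trig; last first.
  apply/is_trig_mxP => i j lt_ij; rewrite !mxE.
  rewrite -val_eqE (gtn_eqF lt_ij); case: eqP => // i0.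
  by rewrite i0 in lt_ij.
by rewrite big1 // => i _; rewrite !mxE eqxx.
Qed.

Lemma mulmx_col_shear_mx (R : pzRingType) m n (M : 'M[R]_(m, n.+1))
    (c : 'I_n.+1 -> R) i j :
  (M *m col_shear_mx c) i j = M i j + (if j == ord0 then 0 else M i ord0 * c j).
Proof.
rewrite mxE (bigD1 j) //= mxE eqxx mulr1; congr (_ + _).
case: eqP => [->|/eqP nj0].
  by rewrite big1 // => k /negbTE nk0; rewrite mxE nk0 mulr0.
rewrite (bigD1 ord0) 1?eq_sym //= mxE eq_sym (negbTE nj0) eqxx.
rewrite big1 ?addr0 // => k /andP[nkj nk0].
by rewrite mxE (negbTE nkj) (negbTE nk0) mulr0.
Qed.

Section LemmaMxReduce.

Variables (R : comPzRingType) (n : nat).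
Variables (aa : 'I_n.+2 -> 'I_n.+2 -> R) (a : 'I_n.+2 -> R).

Let M := lemma_mx aa a *m col_shear_mx (aa ord0).

Definition lemma_mx_reduced : 'M[R]_n.+1 :=
  lemma_mx (fun i j => aa (lift ord0 i) (lift ord0 j))
           (fun j => a (lift ord0 j) + a ord0 * aa ord0 (lift ord0 j)).

Lemma lemma_mx_col_shear_row0 j : M ord0 j = (j == ord0)%:R.
Proof.
rewrite mulmx_col_shear_mx !mxE /= mul1r.
have [_|nj0] := eqVneq j ord0; first by rewrite addr0.
have j_gt0 : (0 < j)%N by rewrite lt0n; exact: nj0.
by rewrite j_gt0 addNr.
Qed.

Lemma lemma_mx_col_shear_minor0 :
  row' ord0 (col' ord0 M) = lemma_mx_reduced.
Proof.
apply/matrixP => i j; rewrite 2!mxE mulmx_col_shear_mx !mxE /=.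
rewrite /bump /= !add1n eqSS ltnS (inj_eq (@lift_inj _ ord0)).
by case: (_ == n)%N => //=; rewrite mul0r addr0.
Qed.

Lemma det_lemma_mx_reduce : \det (lemma_mx aa a) = \det lemma_mx_reduced.
Proof.
rewrite -[LHS]mulr1 -(det_col_shear_mx (aa ord0)) -det_mulmx -/M.
rewrite (expand_det_row _ ord0) big_ord_recl big1 ?addr0; last first.
  by move=> j _; rewrite lemma_mx_col_shear_row0 mul0r.
rewrite lemma_mx_col_shear_row0 eqxx mul1r /cofactor expr0 mul1r.
by rewrite lemma_mx_col_shear_minor0.
Qed.

End LemmaMxReduce.

Lemma det_lemma_mx_gt0 (R : numDomainType) n
    (aa : 'I_n.+1 -> 'I_n.+1 -> R) (a : 'I_n.+1 -> R) :
  (forall i j : 'I_n.+1, (i < j)%N -> 0 <= aa i j) ->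
  (forall i : 'I_n.+1, (i < n)%N -> 0 <= a i) ->
  (forall i : 'I_n.+1, (i : nat) = n -> 0 < a i) ->
  0 < \det (lemma_mx aa a).
Proof.
elim: n aa a => [|n IH] aa a haa ha han.
  by rewrite det_mx11 mxE; apply: han.
have a0_aa_ge0 j : 0 <= a ord0 * aa ord0 (lift ord0 j) by rewrite mulr_ge0 ?ha ?haa.
rewrite det_lemma_mx_reduce; apply: IH => [i j lt_ij | i lt_in | i def_i].
- by apply: haa; rewrite /= /bump /= !add1n ltnS.
- by rewrite addr_ge0 ?ha.
- by rewrite ltr_wpDr ?han //= /bump /= add1n def_i.
Qed.

Theorem lemma2p5 (R : realType) (n : nat) (hn : (2 <= n)%N)
  (aa : 'I_n -> 'I_n -> R) (a : 'I_n -> R)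
  (haa : forall i j : 'I_n, (i < j)%N -> 0 <= aa i j)
  (ha : forall i : 'I_n, (i < n.-1)%N -> 0 <= a i)
  (han : forall i : 'I_n, (i : nat) = n.-1 -> 0 < a i) :
  0 < \det (lemma_mx aa a).
Proof.
case: n hn aa a haa ha han => [|n] // _ aa a.
exact: det_lemma_mx_gt0.
Qed.
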